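(* Let $\mathbf P=(P,\leq,{}',0,1)$ be an orthogonal lub-complete poset. Then the following conditions are equivalent: (i) $\mathbf P$ is an orthomodular poset. (ii) $\mathbf P$ satisfies $x\leq y$ if and only if $x\rightarrow_K y=1$ for all $x,y\in P$. (iii) $\mathbf P$ satisfies $x\leq y$ if and only if $x\rightarrow_N y=1$ for all $x,y\in P$.
   Context: $(P,\leq,{}',0,1)$ is a bounded poset with an antitone involution ${}'$; orthogonal means $x\leq y'$ implies $x\vee y$ exists; lub-complete means for every lower bound $x$ of a finite subset $M$ there is a maximal lower bound of $M$ above $x$; orthomodular means orthogonal and $x\leq y$ implies $x\vee(y\wedge x')=y$. For $A\subseteq P$, $L(A)$, $U(A)$ are the lower and upper cones, $\mathrm{Max}\,A$, $\mathrm{Min}\,A$ the sets of maximal and minimal elements; joins/meets with sets are elementwise. Kalmbach implication: $x\rightarrow_K y:=\mathrm{Max}\,L(x',y)\vee \mathrm{Max}\,L(x',y')\vee (x\wedge \mathrm{Min}\,U(x',y))$; non-tolens implication: $x\rightarrow_N y:=y'\rightarrow_K x'$. ''$=1$'' means equal to $\{1\}$. *)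

From Stdlib Require Import List.

Section PosetDefs.
Variable P : Type.
Variable le : P -> P -> Prop.
Variable c : P -> P.
Variables zero one : P.

Definition bounded_poset_antitone_involution : Prop :=
  (forall x, le x x) /\
  (forall x y, le x y -> le y x -> x = y) /\
  (forall x y z, le x y -> le y z -> le x z) /\
  (forall x, le zero x /\ le x one) /\
  (forall x y, le x y -> le (c y) (c x)) /\
  (forall x, c (c x) = x).

Definition is_sup (x y s : P) : Prop :=
  le x s /\ le y s /\ (forall u, le x u -> le y u -> le s u).
Definition is_inf (x y m : P) : Prop :=
  le m x /\ le m y /\ (forall u, le u x -> le u y -> le u m).

Definition Lc (A : P -> Prop) : P -> Prop := fun x => forall a, A a -> le x a.
Definition Uc (A : P -> Prop) : P -> Prop := fun x => forall a, A a -> le a x.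
Definition pair_set (x y : P) : P -> Prop := fun t => t = x \/ t = y.

Definition MaxS (A : P -> Prop) : P -> Prop :=
  fun x => A x /\ (forall y, A y -> le x y -> y = x).
Definition MinS (A : P -> Prop) : P -> Prop :=
  fun x => A x /\ (forall y, A y -> le y x -> y = x).

Definition orthogonal : Prop :=
  forall x y, le x (c y) -> exists s, is_sup x y s.

Definition lub_complete : Prop :=
  forall (M : list P) (x : P), Lc (fun m => In m M) x ->
    exists w, MaxS (Lc (fun m => In m M)) w /\ le x w.

Definition orthomodular : Prop :=
  orthogonal /\
  forall x y, le x y -> exists m, is_inf y (c x) m /\ is_sup x m y.

(* Kalmbach implication, a subset of P; joins/meets with sets are elementwise:
   x ->K y = Max L(x',y) v Max L(x',y') v (x ^ Min U(x',y)) *)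
Definition kalmbach (x y : P) : P -> Prop :=
  fun t => exists a b d e,
    MaxS (Lc (pair_set (c x) y)) a /\
    MaxS (Lc (pair_set (c x) (c y))) b /\
    MinS (Uc (pair_set (c x) y)) d /\
    (exists ab, is_sup a b ab /\ is_inf x d e /\ is_sup ab e t).

Definition nontolens (x y : P) : P -> Prop := kalmbach (c y) (c x).

Definition is_one (A : P -> Prop) : Prop := forall t, A t <-> t = one.

End PosetDefs.

Arguments bounded_poset_antitone_involution {P}.
Arguments is_sup {P}. Arguments is_inf {P}. Arguments Lc {P}. Arguments Uc {P}.
Arguments pair_set {P}. Arguments MaxS {P}. Arguments MinS {P}.
Arguments orthogonal {P}. Arguments lub_complete {P}. Arguments orthomodular {P}.
Arguments kalmbach {P}. Arguments nontolens {P}. Arguments is_one {P}.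

From Stdlib Require Import List.

(* For x <= y the sets occurring in x ->K y are cones of existing bounds:
   Max L(x',y) = {y ^ x'}, Max L(x',y') = {y'} and, once x v x' = 1,
   Min U(x',y) = {1}.  Hence x ->K y = 1 amounts to (y ^ x') v y' v x = 1,
   which follows from the orthomodular law x v (y ^ x') = y.  Conversely,
   in an orthomodular poset the rule "p <= q and p v q' = 1 imply p = q"
   turns 1 in x ->K y into Max L(x',y') = {y'}, i.e. x <= y.  If instead (ii)
   holds, then s = x v (y ^ x') satisfies s <= y and y' v s = 1, so y ->K s = 1
   and therefore y <= s, which is the orthomodular law.  Condition (iii) is
   (ii) transported along the involution. *)

Section Poset.

Context {P : Type} {le : P -> P -> Prop} {c : P -> P} {zero one : P}.
Hypothesis Hposet : bounded_poset_antitone_involution le c zero one.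

Lemma le_refl x : le x x.
Proof. destruct Hposet as (refl & _); apply refl. Qed.

Lemma le_antisym x y : le x y -> le y x -> x = y.
Proof. destruct Hposet as (_ & antisym & _); apply antisym. Qed.

Lemma le_trans x y z : le x y -> le y z -> le x z.
Proof. destruct Hposet as (_ & _ & trans & _); apply trans. Qed.

Lemma le_bot x : le zero x.
Proof. destruct Hposet as (_ & _ & _ & bounds & _); apply bounds. Qed.

Lemma le_top x : le x one.
Proof. destruct Hposet as (_ & _ & _ & bounds & _); apply bounds. Qed.

Lemma compl_anti x y : le x y -> le (c y) (c x).
Proof. destruct Hposet as (_ & _ & _ & _ & anti & _); apply anti. Qed.

Lemma compl_invol x : c (c x) = x.
Proof. destruct Hposet as (_ & _ & _ & _ & _ & invol); apply invol. Qed.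

Local Hint Resolve le_refl le_bot le_top : core.

Lemma compl_le_compl x y : le (c x) (c y) <-> le y x.
Proof.
  split; [|apply compl_anti].
  intro H. rewrite <- (compl_invol y), <- (compl_invol x). apply compl_anti, H.
Qed.

Lemma le_compl_swap x y : le x (c y) -> le y (c x).
Proof. intro H. rewrite <- (compl_invol y). apply compl_anti, H. Qed.

Lemma compl_le_swap x y : le (c x) y -> le (c y) x.
Proof. intro H. rewrite <- (compl_invol x). apply compl_anti, H. Qed.

Lemma compl_bot : c zero = one.
Proof.
  apply le_antisym; [apply le_top|].
  rewrite <- (compl_invol one). apply compl_anti, le_bot.
Qed.

Lemma compl_top : c one = zero.
Proof. rewrite <- compl_bot. apply compl_invol. Qed.

Lemma is_sup_ub_l {x y s} : is_sup le x y s -> le x s.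
Proof. intros (H & _); exact H. Qed.

Lemma is_sup_ub_r {x y s} : is_sup le x y s -> le y s.
Proof. intros (_ & H & _); exact H. Qed.

Lemma is_sup_least {x y s u} : is_sup le x y s -> le x u -> le y u -> le s u.
Proof. intros (_ & _ & H); apply H. Qed.

Lemma is_inf_lb_l {x y s} : is_inf le x y s -> le s x.
Proof. intros (H & _); exact H. Qed.

Lemma is_inf_lb_r {x y s} : is_inf le x y s -> le s y.
Proof. intros (_ & H & _); exact H. Qed.

Lemma is_inf_greatest {x y s u} : is_inf le x y s -> le u x -> le u y -> le u s.
Proof. intros (_ & _ & H); apply H. Qed.

Lemma is_sup_comm {x y s} : is_sup le x y s -> is_sup le y x s.
Proof. intros (H1 & H2 & H3). split; [|split]; auto. Qed.

Lemma is_inf_comm {x y s} : is_inf le x y s -> is_inf le y x s.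
Proof. intros (H1 & H2 & H3). split; [|split]; auto. Qed.

Lemma is_sup_unique {x y s s'} : is_sup le x y s -> is_sup le x y s' -> s = s'.
Proof.
  intros Hs Hs'. apply le_antisym.
  - apply (is_sup_least Hs); [apply (is_sup_ub_l Hs') | apply (is_sup_ub_r Hs')].
  - apply (is_sup_least Hs'); [apply (is_sup_ub_l Hs) | apply (is_sup_ub_r Hs)].
Qed.

Lemma is_inf_unique {x y s s'} : is_inf le x y s -> is_inf le x y s' -> s = s'.
Proof.
  intros Hs Hs'. apply le_antisym.
  - apply (is_inf_greatest Hs'); [apply (is_inf_lb_l Hs) | apply (is_inf_lb_r Hs)].
  - apply (is_inf_greatest Hs); [apply (is_inf_lb_l Hs') | apply (is_inf_lb_r Hs')].
Qed.

Lemma is_sup_le_r p q : le p q -> is_sup le p q q.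
Proof. intro H. split; [|split]; auto. Qed.

Lemma is_inf_le_l p q : le p q -> is_inf le p q p.
Proof. intro H. split; [|split]; auto. Qed.

Lemma is_inf_of_is_sup_compl x y s : is_sup le (c x) (c y) s -> is_inf le x y (c s).
Proof.
  intro Hs. split; [|split].
  - apply compl_le_swap, (is_sup_ub_l Hs).
  - apply compl_le_swap, (is_sup_ub_r Hs).
  - intros u ux uy. apply le_compl_swap, (is_sup_least Hs); apply compl_anti; assumption.
Qed.

Lemma Lc_pair p q z : Lc le (pair_set p q) z <-> le z p /\ le z q.
Proof.
  split.
  - intro H. split; apply H; [left | right]; reflexivity.
  - intros [zp zq] a [-> | ->]; assumption.
Qed.

Lemma Uc_pair p q z : Uc le (pair_set p q) z <-> le p z /\ le q z.
Proof.
  split.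
  - intro H. split; apply H; [left | right]; reflexivity.
  - intros [pz qz] a [-> | ->]; assumption.
Qed.

Lemma MaxS_Lc_pair_inf {p q m} :
  is_inf le p q m -> forall a, MaxS le (Lc le (pair_set p q)) a <-> a = m.
Proof.
  intros Hm a. split.
  - intros (aL & aM). apply Lc_pair in aL as [ap aq].
    symmetry. apply aM; [apply Lc_pair; split|]; eauto using is_inf_lb_l, is_inf_lb_r, is_inf_greatest.
  - intros ->. split; [apply Lc_pair; eauto using is_inf_lb_l, is_inf_lb_r|].
    intros z zL mz. apply Lc_pair in zL as [zp zq].
    apply le_antisym; eauto using is_inf_greatest.
Qed.

Lemma MinS_Uc_pair_sup {p q s} :
  is_sup le p q s -> forall d, MinS le (Uc le (pair_set p q)) d <-> d = s.
Proof.
  intros Hs d. split.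
  - intros (dU & dM). apply Uc_pair in dU as [pd qd].
    symmetry. apply dM; [apply Uc_pair; split|]; eauto using is_sup_ub_l, is_sup_ub_r, is_sup_least.
  - intros ->. split; [apply Uc_pair; eauto using is_sup_ub_l, is_sup_ub_r|].
    intros z zU zs. apply Uc_pair in zU as [pz qz].
    apply le_antisym; eauto using is_sup_least.
Qed.

Lemma kalmbach_spec {x y a b d} :
  is_inf le (c x) y a -> is_inf le (c x) (c y) b -> is_sup le (c x) y d ->
  forall t, kalmbach le c x y t <->
    exists ab e, is_sup le a b ab /\ is_inf le x d e /\ is_sup le ab e t.
Proof.
  intros Ha Hb Hd t. split.
  - intros (a' & b' & d' & e & Ha' & Hb' & Hd' & ab & Hab & He & Ht).
    apply (MaxS_Lc_pair_inf Ha) in Ha'. apply (MaxS_Lc_pair_inf Hb) in Hb'.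
    apply (MinS_Uc_pair_sup Hd) in Hd'. subst a' b' d'.
    exists ab, e. auto.
  - intros (ab & e & Hab & He & Ht).
    exists a, b, d, e.
    rewrite (MaxS_Lc_pair_inf Ha), (MaxS_Lc_pair_inf Hb), (MinS_Uc_pair_sup Hd).
    split; [|split; [|split]]; [reflexivity .. | exists ab; auto].
Qed.

Lemma kalmbach_one_compl_sup x y : kalmbach le c x y one -> is_sup le x (c x) one.
Proof.
  intros (a & b & d & e & (aL & _) & (bL & _) & _ & ab & Hab & He & Ht).
  apply Lc_pair in aL as [ax _]. apply Lc_pair in bL as [bx _].
  split; [|split]; auto.
  intros u xu cxu. apply (is_sup_least Ht).
  - apply (is_sup_least Hab); eauto using le_trans.
  - eauto using le_trans, is_inf_lb_l.
Qed.

Lemma le_kalmbach_iff_le_nontolens :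
  (forall x y, le x y <-> is_one one (kalmbach le c x y)) <->
  (forall x y, le x y <-> is_one one (nontolens le c x y)).
Proof.
  unfold nontolens. split; intros H x y.
  - rewrite <- H. symmetry. apply compl_le_compl.
  - specialize (H (c y) (c x)). rewrite !compl_invol in H.
    rewrite <- H. symmetry. apply compl_le_compl.
Qed.

Section Orthogonal.

Hypothesis Horth : orthogonal le c.

Lemma exists_inf_of_compl_le x y : le (c x) y -> exists m, is_inf le x y m.
Proof.
  intro H. destruct (Horth (c x) (c y)) as (s & Hs).
  { rewrite compl_invol. exact H. }
  exists (c s). apply is_inf_of_is_sup_compl, Hs.
Qed.

Section Orthoposet.

Hypothesis compl_sup : forall x, is_sup le x (c x) one.

Lemma compl_inf_zero x : is_inf le x (c x) zero.
Proof. rewrite <- compl_top. apply is_inf_of_is_sup_compl, compl_sup. Qed.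

Lemma is_sup_compl_join_inf_one {x y m s} :
  le x y -> is_inf le y (c x) m -> is_sup le x m s -> is_sup le (c y) s one.
Proof.
  intros Hxy Hm Hs.
  assert (Hsy : le s y) by (apply (is_sup_least Hs); eauto using is_inf_lb_l).
  destruct (Horth (c y) s) as (v & Hv). { apply compl_anti, Hsy. }
  (* v' <= y ^ x' <= s, so v is above both s and s' *)
  assert (Hvs : le (c v) s).
  { apply le_trans with m; [|apply (is_sup_ub_r Hs)].
    apply (is_inf_greatest Hm).
    - apply compl_le_swap, (is_sup_ub_l Hv).
    - apply compl_anti, le_trans with s; [apply (is_sup_ub_l Hs) | apply (is_sup_ub_r Hv)]. }
  split; [|split]; auto.
  intros u yu su. apply le_trans with v; [|apply (is_sup_least Hv); assumption].
  apply (is_sup_least (compl_sup s)); [apply (is_sup_ub_r Hv) | apply compl_le_swap, Hvs].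
Qed.

Lemma kalmbach_one_of_sup_compl {y s} :
  le s y -> is_sup le (c y) s one -> is_one one (kalmbach le c y s).
Proof.
  intros Hsy Hsup.
  assert (Ha : is_inf le (c y) s zero).
  { split; [|split]; auto. intros u u1 u2.
    apply (is_inf_greatest (compl_inf_zero y)); eauto using le_trans. }
  assert (Hb : is_inf le (c y) (c s) (c y)) by apply is_inf_le_l, compl_anti, Hsy.
  intro t. rewrite (kalmbach_spec Ha Hb Hsup). split.
  - intros (ab & e & Hab & He & Ht).
    assert (ab = c y) as -> by (eapply is_sup_unique; [exact Hab | apply is_sup_le_r; auto]).
    assert (e = y) as -> by (eapply is_inf_unique; [exact He | apply is_inf_le_l; auto]).
    eapply is_sup_unique; [exact Ht | apply is_sup_comm, compl_sup].
  - intros ->. exists (c y), y.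
    split; [apply is_sup_le_r; auto | split; [apply is_inf_le_l; auto |]].
    apply is_sup_comm, compl_sup.
Qed.

Lemma kalmbach_one_of_le_decomp {x y m} :
  le x y -> is_inf le y (c x) m -> is_sup le x m y -> is_one one (kalmbach le c x y).
Proof.
  intros Hxy Hm Hs.
  assert (Hb : is_inf le (c x) (c y) (c y)) by apply is_inf_comm, is_inf_le_l, compl_anti, Hxy.
  assert (Hd : is_sup le (c x) y one).
  { split; [|split]; auto. intros u xu yu.
    apply (is_sup_least (compl_sup x)); eauto using le_trans. }
  assert (Hone : forall u, le m u -> le (c y) u -> le x u -> le one u).
  { intros u mu cyu xu.
    apply (is_sup_least (compl_sup y)); [apply (is_sup_least Hs) |]; assumption. }
  intro t. rewrite (kalmbach_spec (is_inf_comm Hm) Hb Hd). split.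
  - intros (ab & e & Hab & He & Ht).
    assert (e = x) as -> by (eapply is_inf_unique; [exact He | apply is_inf_le_l; auto]).
    apply le_antisym; [auto | apply Hone];
      eauto using le_trans, is_sup_ub_l, is_sup_ub_r.
  - intros ->. destruct (Horth m (c y)) as (ab & Hab).
    { rewrite compl_invol. apply (is_inf_lb_l Hm). }
    exists ab, x. split; [exact Hab | split; [apply is_inf_le_l; auto |]].
    split; [|split]; auto.
    intros u abu xu. apply Hone; eauto using le_trans, is_sup_ub_l, is_sup_ub_r.
Qed.

End Orthoposet.

Section Orthomodular.

Hypothesis Hom : forall x y, le x y -> exists m, is_inf le y (c x) m /\ is_sup le x m y.

Lemma om_compl_sup x : is_sup le x (c x) one.
Proof.
  destruct (Hom x one (le_top x)) as (m & Hm & Hs).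
  assert (m = c x) as <-; [|exact Hs].
  eapply is_inf_unique; [exact Hm | apply is_inf_comm, is_inf_le_l; auto].
Qed.

Lemma om_eq_of_sup_compl p q : le p q -> is_sup le p (c q) one -> p = q.
Proof.
  intros Hpq Hsup. destruct (Hom _ _ Hpq) as (m & Hm & Hs).
  assert (m = zero) as ->.
  { rewrite <- (compl_invol m), <- compl_top. f_equal.
    apply le_antisym; auto. apply (is_sup_least Hsup).
    - apply le_compl_swap, (is_inf_lb_r Hm).
    - apply compl_anti, (is_inf_lb_l Hm). }
  symmetry. eapply is_sup_unique; [exact Hs | apply is_sup_comm, is_sup_le_r; auto].
Qed.

Lemma om_le_of_kalmbach_one x y : kalmbach le c x y one -> le x y.
Proof.
  intros (a & b & d & e & (aL & _) & (bL & _) & (dU & dM) & ab & Hab & He & Ht).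
  apply Lc_pair in aL as [ax ay]. apply Lc_pair in bL as [bx bcy].
  apply Uc_pair in dU as [xd yd].
  assert (Habx : ab = c x).
  { apply om_eq_of_sup_compl; [apply (is_sup_least Hab); assumption|].
    rewrite compl_invol. split; [|split]; auto. intros u abu xu.
    apply (is_sup_least Ht); eauto using le_trans, is_inf_lb_l. }
  assert (d = one) as ->.
  { apply le_antisym; auto. apply (is_sup_least Ht).
    - rewrite Habx. exact xd.
    - apply (is_inf_lb_r He). }
  assert (Hby : b = c y).
  { apply om_eq_of_sup_compl; [exact bcy|].
    rewrite compl_invol. split; [|split]; auto. intros u bu yu.
    rewrite (dM u); auto. apply Uc_pair. split; [|exact yu].
    rewrite <- Habx. apply (is_sup_least Hab); eauto using le_trans. }
  apply compl_le_compl. rewrite <- Hby. exact bx.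
Qed.

Lemma kalmbach_criterion_of_orthomodular x y :
  le x y <-> is_one one (kalmbach le c x y).
Proof.
  split.
  - intro Hxy. destruct (Hom _ _ Hxy) as (m & Hm & Hs).
    exact (kalmbach_one_of_le_decomp om_compl_sup Hxy Hm Hs).
  - intro H. apply om_le_of_kalmbach_one, H. reflexivity.
Qed.

End Orthomodular.

Section KalmbachCriterion.

Hypothesis Hkal : forall x y, le x y <-> is_one one (kalmbach le c x y).

Lemma kalmbach_criterion_compl_sup x : is_sup le x (c x) one.
Proof. apply (kalmbach_one_compl_sup x one), (proj1 (Hkal x one) (le_top x)). reflexivity. Qed.

Lemma orthomodular_law_of_kalmbach_criterion x y :
  le x y -> exists m, is_inf le y (c x) m /\ is_sup le x m y.
Proof.
  intro Hxy.
  destruct (exists_inf_of_compl_le y (c x)) as (m & Hm).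
  { apply compl_anti, Hxy. }
  destruct (Horth x m) as (s & Hs). { apply le_compl_swap, (is_inf_lb_r Hm). }
  assert (Hsy : le s y) by (apply (is_sup_least Hs); eauto using is_inf_lb_l).
  assert (Hys : le y s).
  { apply Hkal, (kalmbach_one_of_sup_compl kalmbach_criterion_compl_sup Hsy).
    exact (is_sup_compl_join_inf_one kalmbach_criterion_compl_sup Hxy Hm Hs). }
  exists m. split; [exact Hm|].
  rewrite <- (le_antisym _ _ Hsy Hys). exact Hs.
Qed.

End KalmbachCriterion.

Lemma orthomodular_iff_kalmbach_criterion :
  orthomodular le c <-> (forall x y, le x y <-> is_one one (kalmbach le c x y)).
Proof.
  split.
  - intros (_ & Hom). exact (kalmbach_criterion_of_orthomodular Hom).
  - intro Hkal. split; [exact Horth | exact (orthomodular_law_of_kalmbach_criterion Hkal)].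
Qed.

End Orthogonal.

End Poset.

Theorem theorem6 (P : Type) (le : P -> P -> Prop) (c : P -> P) (zero one : P) :
  bounded_poset_antitone_involution le c zero one ->
  orthogonal le c ->
  lub_complete le ->
  ((orthomodular le c <->
      (forall x y, le x y <-> is_one one (kalmbach le c x y))) /\
   (orthomodular le c <->
      (forall x y, le x y <-> is_one one (nontolens le c x y)))).
Proof.
  intros Hposet Horth _.
  pose proof (orthomodular_iff_kalmbach_criterion Hposet Horth) as HK.
  split; [exact HK|].
  rewrite HK. exact (le_kalmbach_iff_le_nontolens Hposet).
Qed.
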